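(* Let $l\in\{1,2,3\}$ and $\lambda_0>0$. Let the base stations be the points of a homogeneous Poisson point process in $\mathbb R^l$ with intensity $\lambda_0$, with a mobile station at the origin, all transmission powers and shadow fading factors equal to $1$. For an increasing path-loss function $h$, let $\left(\frac CI\right)_h=\frac{1/h(R_1)}{\sum_{i\ge2}1/h(R_i)}$, where $R_1\le R_2\le\cdots$ are the ordered distances of the base stations from the origin. Let $h_1(r)=r^{\varepsilon_1}$ for $r\ge0$ and $h_2(r)=r^{\varepsilon_1}$ for $r\le1$, $h_2(r)=r^{\varepsilon_2}$ for $r>1$, and write $\left(\frac CI\right)_i=\left(\frac CI\right)_{h_i}$. If $\varepsilon_2>\varepsilon_1>l$, then $\left(\frac CI\right)_1\le_{\mathrm{st}}\left(\frac CI\right)_2$. If $\varepsilon_1>\varepsilon_2>l$, then $\left(\frac CI\right)_1\ge_{\mathrm{st}}\left(\frac CI\right)_2$.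
   Context: The mobile is served by the BS with strongest received power (the nearest one) and all other BSs interfere; received power at distance $R$ is $1/h(R)$. For random variables $X,Y$, $X\le_{\mathrm{st}}Y$ means $\mathbb P(X>x)\le\mathbb P(Y>x)$ for all real $x$, and $X\ge_{\mathrm{st}}Y$ means $Y\le_{\mathrm{st}}X$. *)

From HB Require Import structures.
From mathcomp Require Import all_boot all_order all_algebra.
From mathcomp Require Import all_classical all_reals all_analysis.
Set Implicit Arguments. Unset Strict Implicit. Unset Printing Implicit Defensive.
Import Order.TTheory GRing.Theory Num.Theory.
Import numFieldNormedType.Exports.
Local Open Scope classical_set_scope.
Local Open Scope ring_scope.

Section Defs.
Context {R : realType} {l : nat}.

Definition enorm (x : 'rV[R]_l) : R := Num.sqrt (\sum_(i < l) x ord0 i ^+ 2).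

Definition borel_set (A : set 'rV[R]_l) : Prop := <<s open >> A.

Definition bounded_set (A : set 'rV[R]_l) : Prop :=
  exists M : R, forall x, A x -> enorm x <= M.

Definition box (a b : 'rV[R]_l) : set 'rV[R]_l :=
  [set x | forall i, a ord0 i <= x ord0 i < b ord0 i].
Definition boxvol (a b : 'rV[R]_l) : R := \prod_(i < l) (b ord0 i - a ord0 i).

Definition leb (A : set 'rV[R]_l) : \bar R :=
  ereal_inf [set z | exists a b : nat -> 'rV[R]_l,
     (forall n i, a n ord0 i <= b n ord0 i) /\
     A `<=` \bigcup_n box (a n) (b n) /\
     z = (\sum_(0 <= n <oo) (boxvol (a n) (b n))%:E)%E].

Definition count_eq (S : set 'rV[R]_l) (A : set 'rV[R]_l) (k : nat) : Prop :=
  exists s : seq 'rV[R]_l, uniq s /\ size s = k /\ [set x | x \in s] = S `&` A.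

Definition poisson_pt (m : R) (k : nat) : R := m ^+ k / (k`!)%:R * expR (- m).

Definition is_hPPP d (Omega : measurableType d) (P : probability Omega R)
    (lam : R) (Phi : Omega -> set 'rV[R]_l) : Prop :=
  (forall A k, borel_set A -> bounded_set A ->
      measurable [set w | count_eq (Phi w) A k]) /\
  (forall n (A : 'I_n -> set 'rV[R]_l) (k : 'I_n -> nat),
      (forall i, borel_set (A i) /\ bounded_set (A i)) ->
      (forall i j, i != j -> A i `&` A j = set0) ->
      P [set w | forall i, count_eq (Phi w) (A i) (k i)] =
      (\prod_(i < n) poisson_pt (lam * fine (leb (A i))) (k i))%:E).

(* C/I for path-loss h: served by the nearest BS (distance R_1), all others
   interfere; the interference is the sum over all points minus the serving term. *)
Definition CI (h : R -> R) (S : set 'rV[R]_l) : \bar R :=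
  let R1 := inf (enorm @` S) in
  let C := (h R1)^-1 in
  (C%:E / ((\esum_(x in S) ((h (enorm x))^-1)%:E) - C%:E))%E.

End Defs.

Definition h1 {R : realType} (e1 : R) (r : R) : R := r `^ e1.
Definition h2 {R : realType} (e1 e2 : R) (r : R) : R :=
  if r <= 1 then r `^ e1 else r `^ e2.

Definition st_le {R : realType} d (Omega : measurableType d) (P : probability Omega R)
    (X Y : Omega -> \bar R) : Prop :=
  forall x : R, (P [set w | x%:E < X w] <= P [set w | x%:E < Y w])%E.

From Pilot Require Import Defs.
From HB Require Import structures.
From mathcomp Require Import all_boot all_order all_algebra.
From mathcomp Require Import all_classical all_reals all_analysis.
From mathcomp Require Import lra ring.
Set Implicit Arguments. Unset Strict Implicit. Unset Printing Implicit Defensive.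
Import Order.TTheory GRing.Theory Num.Theory.
Import numFieldNormedType.Exports.
Local Open Scope classical_set_scope.
Local Open Scope ring_scope.

(* The comparison holds pathwise, for every configuration of base stations.
   C/I exceeds x > 0 exactly when the total received power is below (1 + x)/x
   times the power C received from the nearest station.  If h_B/h_A is
   nondecreasing, a station at distance r >= R_1 contributes under h_B at most
   C_B/C_A times its contribution under h_A, so the total power scales by at most
   C_B/C_A and {C/I_A > x} is contained in {C/I_B > x}.  The ratio h_2/h_1 is 1 on
   [0, 1] and r^(e2 - e1) beyond, nondecreasing exactly when e1 <= e2.
   The stochastic order is then monotonicity of P.  The events are measurable
   because the total power is approximated from below by weighted counts of
   points in thin annuli; of the Poisson hypothesis only the measurability of
   the counting events is used. *)

Section EsumSeq.
Context {R : realType} {T : choiceType}.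
Implicit Types (S : set T) (g : T -> R).

Lemma big_seq_le_esum S g s : (forall x, S x -> 0 <= g x) ->
  uniq s -> {subset s <= S} ->
  ((\sum_(x <- s) g x)%:E <= \esum_(x in S) (g x)%:E)%E.
Proof.
move=> g0 us sS; apply: esum_ge; exists [set` s].
  split; first exact: finite_seq.
  by move=> x /= xs; rewrite -in_setE; apply: sS.
by rewrite -sumEFin fsbig_seq.
Qed.

Lemma esum_gt_big_seq S g (y : \bar R) : (y < \esum_(x in S) (g x)%:E)%E ->
  exists s, [/\ uniq s, {subset s <= S} & (y < (\sum_(x <- s) g x)%:E)%E].
Proof.
move=> /ereal_sup_gt[_ [X [finX XS] <-]] yX.
have [s0 X0] := (finite_seqP X).1 finX.
exists (undup s0); split; first exact: undup_uniq.
  by move=> x; rewrite mem_undup => xs; rewrite in_setE; apply: XS; rewrite X0.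
rewrite -sumEFin fsbig_seq ?undup_uniq//.
suff -> : [set` undup s0] = X by [].
by rewrite X0; apply/seteqP; split=> x /=; rewrite mem_undup.
Qed.

Lemma esum_le_big_seq S g (M : \bar R) :
  (forall s, uniq s -> {subset s <= S} -> ((\sum_(x <- s) g x)%:E <= M)%E) ->
  (\esum_(x in S) (g x)%:E <= M)%E.
Proof.
move=> H; rewrite leNgt; apply/negP => /esum_gt_big_seq[s [us sS]].
by rewrite ltNge H.
Qed.

End EsumSeq.

Section PathLoss.
Context {R : realType}.

(* The last clause (right upper semicontinuity) lets a strict bound at the
   nearest distance survive a slight increase of the radius. *)
Definition path_loss (h : R -> R) :=
  [/\ h 0 = 0, (forall r, 0 < r -> 0 < h r),
      (forall r s, 0 < r -> r < s -> h r < h s) &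
      (forall a b, 0 < a -> h a < b -> exists2 r, a < r & h r < b)].

Lemma powR_lt_right (e a b : R) : 0 < e -> 0 < a -> a `^ e < b ->
  exists2 r, a < r & r `^ e < b.
Proof.
move=> e0 a0 ab; set m := (a `^ e + b) / 2.
have am : a `^ e < m by rewrite /m; lra.
have mb : m < b by rewrite /m; lra.
have m0 : 0 <= m by apply: le_trans (ltW am); exact: powR_ge0.
have powK : (m `^ e^-1) `^ e = m by rewrite -powRrM mulVf ?gt_eqF// powRr1.
exists (m `^ e^-1); last by rewrite powK.
rewrite ltNge; apply/negP => le.
have := ge0_ler_powR (ltW e0) (powR_ge0 _ _) _ le.
by rewrite powK nnegrE (ltW a0) leNgt am => /(_ isT).
Qed.

Lemma path_loss_h1 (e : R) : 0 < e -> path_loss (h1 e).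
Proof.
move=> e0; split; rewrite /h1.
- by rewrite powR0 ?gt_eqF.
- by move=> r r0; apply: powR_gt0.
- move=> r s r0 rs; apply: gt0_ltr_powR => //; rewrite nnegrE ltW//.
  exact: lt_trans rs.
- by move=> a b a0 ab; exact: powR_lt_right.
Qed.

Lemma path_loss_h2 (e1 e2 : R) : 0 < e1 -> 0 < e2 -> path_loss (h2 e1 e2).
Proof.
move=> e10 e20; have [H0 Hp Hm Hr] := path_loss_h1 e10.
have [_ Gp Gm Gr] := path_loss_h1 e20.
rewrite /h1 in H0 Hp Hm Hr Gp Gm Gr.
have pow1 (e : R) : 1 `^ e = 1 by rewrite powR1.
split; rewrite /h2.
- by rewrite ler01.
- by move=> r r0; case: ifP => _; [exact: Hp|exact: Gp].
- move=> r s r0 rs; case: ifPn => r1; case: ifPn => s1.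
  + exact: Hm.
  + rewrite -ltNge in s1; have e1r : r `^ e1 <= 1.
      by rewrite -[leRHS](pow1 e1); apply: ge0_ler_powR => //; rewrite ?nnegrE ?ltW.
    by apply: le_lt_trans e1r _; rewrite -[ltLHS](pow1 e2); apply: Gm.
  + by rewrite -ltNge in r1; have := lt_le_trans (lt_trans r1 rs) s1; rewrite ltxx.
  + exact: Gm.
- move=> a b a0 ab; have [a1|a1] := ltP a 1.
  + move: ab; rewrite (ltW a1) => /(Hr _ _ a0)[r ar rb].
    have r1 : Num.min r 1 <= 1 by rewrite ge_min lexx orbT.
    exists (Num.min r 1); first by rewrite lt_min ar a1.
    rewrite r1; apply: le_lt_trans rb; apply: (ge0_ler_powR (ltW e10)).
    * by rewrite nnegrE le_min (ltW (lt_trans a0 ar)) ler01.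
    * by rewrite nnegrE ltW // (lt_trans a0 ar).
    * by rewrite ge_min lexx.
  + have ha : (if a <= 1 then a `^ e1 else a `^ e2) = a `^ e2.
      case: ifPn => // a1'; have -> : a = 1 by apply/le_anti; rewrite a1 a1'.
      by rewrite !pow1.
    rewrite ha in ab; have [r ar rb] := Gr a b a0 ab.
    exists r => //; case: ifPn => // r1.
    by have := lt_le_trans (le_lt_trans a1 ar) r1; rewrite ltxx.
Qed.

Lemma powR_cross_le (a r p q : R) : 0 < a -> a <= r -> p <= q ->
  a `^ q * r `^ p <= a `^ p * r `^ q.
Proof.
move=> a0 ar pq; have r0 : 0 < r by exact: lt_le_trans ar.
rewrite -(subrK p q); have : 0 <= q - p by rewrite subr_ge0.
move: (q - p) => d d0; rewrite !powRD ?(gt_eqF a0) ?(gt_eqF r0) ?implybT //.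
rewrite [leLHS](_ : _ = (a `^ p * r `^ p) * a `^ d); last by ring.
rewrite [leRHS](_ : _ = (a `^ p * r `^ p) * r `^ d); last by ring.
apply: ler_wpM2l; first by rewrite mulr_ge0 ?powR_ge0.
by apply: ge0_ler_powR => //; rewrite ?nnegrE ltW.
Qed.

Lemma h2_h1_ratio_le (e1 e2 : R) : e1 <= e2 -> forall a r, 0 < a -> a <= r ->
  h2 e1 e2 a * h1 e1 r <= h1 e1 a * h2 e1 e2 r.
Proof.
move=> e12 a r a0 ar; rewrite /h1 /h2; have r0 : 0 < r by exact: lt_le_trans ar.
case: ifPn => a1; case: ifPn => r1.
- by rewrite mulrC.
- apply: ler_wpM2l; first exact: powR_ge0.
  by apply: ler_powR => //; rewrite ltW // ltNge.
- by move: a1; rewrite (le_trans ar r1).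
- by apply: powR_cross_le.
Qed.

Lemma h1_h2_ratio_le (e1 e2 : R) : e2 <= e1 -> forall a r, 0 < a -> a <= r ->
  h1 e1 a * h2 e1 e2 r <= h2 e1 e2 a * h1 e1 r.
Proof.
move=> e21 a r a0 ar; rewrite /h1 /h2; have r0 : 0 < r by exact: lt_le_trans ar.
case: ifPn => r1; case: ifPn => a1.
- by rewrite mulrC.
- by move: a1; rewrite (le_trans ar r1).
- apply: ler_wpM2l; first exact: powR_ge0.
  by apply: ler_powR => //; rewrite ltW // ltNge.
- by apply: powR_cross_le.
Qed.

End PathLoss.

Section Power.
Context {R : realType} {l : nat}.
Implicit Types (S : set 'rV[R]_l) (h : R -> R).

Definition power h (r : R) := (h r)^-1.

(* [inf set0 = 0]: for an empty configuration the nearest distance is 0. *)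
Definition dist_nearest S : R := inf (@enorm R l @` S).

Definition total_power h S : \bar R := \esum_(x in S) (power h (enorm x))%:E.

Lemma CIE h S : CI h S =
  ((power h (dist_nearest S))%:E /
   (total_power h S - (power h (dist_nearest S))%:E))%E.
Proof. by []. Qed.

Lemma enorm_ge0 (x : 'rV[R]_l) : 0 <= enorm x.
Proof. exact: sqrtr_ge0. Qed.

Lemma dist_nearest_ge0 S : 0 <= dist_nearest S.
Proof.
have [->|/set0P[x Sx]] := eqVneq S set0; first by rewrite /dist_nearest image_set0 inf0.
apply: lb_le_inf; first by exists (enorm x), x.
by move=> _ [y _ <-]; exact: enorm_ge0.
Qed.

Lemma dist_nearest_le S x : S x -> dist_nearest S <= enorm x.
Proof.
move=> Sx; apply: ge_inf; last by exists x.
by exists 0 => _ [y _ <-]; exact: enorm_ge0.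
Qed.

Lemma dist_nearest_gt0_neq0 S : 0 < dist_nearest S -> S !=set0.
Proof.
have [->|/set0P//] := eqVneq S set0.
by rewrite /dist_nearest image_set0 inf0 ltxx.
Qed.

Lemma dist_nearest_lt S t : S !=set0 -> dist_nearest S < t ->
  exists2 x, S x & enorm x < t.
Proof.
move=> [x Sx] /inf_lt[|_ [y Sy <-] yt]; first by exists (enorm x), x.
by exists y.
Qed.

Variables (h : R -> R) (hh : path_loss h).

Lemma power0 : power h 0 = 0.
Proof. by case: hh => h0 _ _ _; rewrite /power h0 invr0. Qed.

Lemma power_gt0 r : 0 < r -> 0 < power h r.
Proof. by case: hh => _ hp _ _ r0; rewrite /power invr_gt0 hp. Qed.

Lemma power_ge0 r : 0 <= r -> 0 <= power h r.
Proof.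
by rewrite le_eqVlt => /predU1P[<-|/power_gt0/ltW//]; rewrite power0.
Qed.

Lemma power_le r s : 0 < r -> r <= s -> power h s <= power h r.
Proof.
case: hh => _ hp hm _ r0; rewrite le_eqVlt => /predU1P[->//|rs].
have s0 := lt_trans r0 rs.
by apply/ltW; rewrite /power ltf_pV2 ?posrE ?hp //; exact: hm.
Qed.

Lemma power_lt_right a c : 0 < a -> c < power h a ->
  exists2 r, a < r & c < power h r.
Proof.
move=> a0 ca; case: hh => _ hp _ hr.
have [c0|c0] := leP c 0.
  by exists (a + 1); [lra | apply: le_lt_trans c0 (power_gt0 _); lra].
have : h a < c^-1 by rewrite -[h a]invrK ltf_pV2 ?posrE ?invr_gt0 ?hp.
move=> /(hr _ _ a0)[r ar hrc]; exists r => //; have r0 := lt_trans a0 ar.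
by rewrite /power -[c]invrK ltf_pV2 ?posrE ?hp ?invr_gt0.
Qed.

Lemma total_power_ge0 S : (0 <= total_power h S)%E.
Proof. by apply: esum_ge0 => x _; rewrite lee_fin power_ge0 ?enorm_ge0. Qed.

(* When the nearest distance [a] is not attained, two points closer than a
   radius [r] with [power r > power a / 2] already carry more than [power a]. *)
Lemma power_nearest_le_total S :
  ((power h (dist_nearest S))%:E <= total_power h S)%E.
Proof.
set a := dist_nearest S.
have [a0|apos] := eqVneq a 0; first by rewrite a0 power0 total_power_ge0.
have {apos} apos : 0 < a by rewrite lt_neqAle eq_sym apos dist_nearest_ge0.
have g0 x : S x -> 0 <= power h (enorm x) by move=> _; rewrite power_ge0 ?enorm_ge0.
have [[x0 Sx0 <-]|natt] := pselect (exists2 x0, S x0 & enorm x0 = a).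
  have := big_seq_le_esum g0 (isT : uniq [:: x0]).
  by rewrite big_seq1; apply => y; rewrite inE => /eqP ->; rewrite in_setE.
have farther x : S x -> a < enorm x.
  by move=> Sx; rewrite lt_neqAle dist_nearest_le // andbT; apply/eqP => ax; apply: natt; exists x.
have half : power h a / 2 < power h a by have := power_gt0 apos; lra.
have [r ar ahr] := power_lt_right apos half.
have Sne := dist_nearest_gt0_neq0 apos.
have [x1 Sx1 x1r] := dist_nearest_lt Sne ar.
have [x2 Sx2 x21] := dist_nearest_lt Sne (farther _ Sx1).
have x12 : x1 != x2 by apply/eqP => e; move: x21; rewrite e ltxx.
have sub : {subset [:: x1; x2] <= S}.
  by move=> y; rewrite !inE => /orP[] /eqP ->; rewrite ?in_setE.
apply: le_trans (big_seq_le_esum g0 _ sub); last by rewrite /= inE x12.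
rewrite lee_fin big_cons big_seq1.
have near x : S x -> enorm x < r -> power h a / 2 < power h (enorm x).
  by move=> Sx xr; apply: lt_le_trans ahr (power_le (lt_trans apos (farther _ Sx)) (ltW xr)).
have := near _ Sx1 x1r; have := near _ Sx2 (lt_trans x21 x1r); lra.
Qed.

Lemma CI_ge0 S : (0 <= CI h S)%E.
Proof.
rewrite CIE; apply: mule_ge0; first by rewrite lee_fin power_ge0 // dist_nearest_ge0.
by rewrite inve_ge0 sube_ge0 ?power_nearest_le_total //; right.
Qed.

Lemma CI_gtE S (x : R) : 0 < x -> (x%:E < CI h S)%E =
  (total_power h S < (power h (dist_nearest S) * ((1 + x) / x))%:E)%E.
Proof.
move=> x0; rewrite CIE.
have := power_nearest_le_total S; have := total_power_ge0 S.
set C := power h (dist_nearest S).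
have [C0|Cpos] := eqVneq C 0.
  by move=> E0 _; rewrite C0 mul0e mul0r !ltNge lee_fin (ltW x0) E0.
have {Cpos} Cpos : 0 < C by rewrite lt_neqAle eq_sym Cpos power_ge0 // dist_nearest_ge0.
case: (total_power h S) => [e| |] //= e0 Ce; last first.
  by rewrite /= addye // invey mule0 ltNge (ltW _) ?lte_fin // ltNge leey.
rewrite lee_fin in Ce; rewrite lte_fin -EFinB inver.
have [eC|eC] := eqVneq (e - C) 0.
  have -> : e = C by apply/eqP; rewrite -subr_eq0 eC.
  rewrite mulry gtr0_sg // mul1e ltry; apply/esym.
  by rewrite -{1}(mulr1 C) ltr_pM2l // ltr_pdivlMr //; lra.
have eCp : 0 < e - C by rewrite lt_neqAle eq_sym eC subr_ge0 Ce.
rewrite -EFinM lte_fin ltr_pdivlMr // mulrA ltr_pdivlMr //.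
by apply/idP/idP; lra.
Qed.

Lemma CI_gt0P S : (0 < CI h S)%E <->
  (0 < power h (dist_nearest S) /\ (total_power h S < +oo)%E).
Proof.
rewrite CIE; have := power_nearest_le_total S; have := total_power_ge0 S.
set C := power h (dist_nearest S).
have [C0|Cpos] := eqVneq C 0.
  by rewrite C0 mul0e !ltxx => _ _; split => // -[].
have {Cpos} Cpos : 0 < C by rewrite lt_neqAle eq_sym Cpos power_ge0 // dist_nearest_ge0.
case: (total_power h S) => [e| |] //= e0 Ce; last first.
  by rewrite /= addye // invey mule0 !ltxx; split => // -[].
rewrite lee_fin in Ce; split => _; first by rewrite ltry.
rewrite -EFinB inver; have [eC|eC] := eqVneq (e - C) 0.
  by rewrite mulry gtr0_sg // mul1e ltry.
have eCp : 0 < e - C by rewrite lt_neqAle eq_sym eC subr_ge0 Ce.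
by rewrite -EFinM lte_fin divr_gt0.
Qed.

End Power.

Section Compare.
Context {R : realType} {l : nat}.
Implicit Types (S : set 'rV[R]_l).
Variables (hA hB : R -> R) (hhA : path_loss hA) (hhB : path_loss hB).
(* [hB / hA] is nondecreasing on [(0, +oo)]. *)
Hypothesis ratio_homo : forall a r, 0 < a -> a <= r -> hB a * hA r <= hA a * hB r.

Lemma power_ratio_le a r : 0 < a -> a <= r ->
  power hB r <= (power hB a / power hA a) * power hA r.
Proof.
move=> a0 ar; have r0 : 0 < r by exact: lt_le_trans ar.
case: hhA => _ pA _ _; case: hhB => _ pB _ _.
have := pA _ a0; have := pA _ r0; have := pB _ a0; have := pB _ r0.
rewrite /power invrK => Br Ba Ar Aa; set k := (hB a * hA r * hB r)^-1.
have k0 : 0 < k by rewrite invr_gt0 !mulr_gt0.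
rewrite [leLHS](_ : _ = (hB a * hA r) * k); last by rewrite /k; field; rewrite !gt_eqF.
rewrite [leRHS](_ : _ = (hA a * hB r) * k); last by rewrite /k; field; rewrite !gt_eqF.
by apply: ler_wpM2r; [exact: ltW | exact: ratio_homo].
Qed.

Lemma total_power_ratio_le S (a := dist_nearest S) : 0 < a ->
  (total_power hB S <= (power hB a / power hA a)%:E * total_power hA S)%E.
Proof.
move=> a0; set k := power hB a / power hA a.
have k0 : 0 < k by rewrite divr_gt0 ?power_gt0.
apply: esum_le_big_seq => s us sS.
apply: (@le_trans _ _ (k%:E * (\sum_(x <- s) power hA (enorm x))%:E)%E).
  rewrite -EFinM lee_fin mulr_sumr [leRHS]big_seq big_seq; apply: ler_sum => x xs.
  by apply: power_ratio_le => //; apply: dist_nearest_le; rewrite -in_setE; exact: sS.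
apply: lee_wpmul2l; first by rewrite lee_fin ltW.
by apply: big_seq_le_esum => // x _; rewrite power_ge0 ?enorm_ge0.
Qed.

Lemma CI_gt_mono S x : (x%:E < CI hA S)%E -> (x%:E < CI hB S)%E.
Proof.
have a_gt0 : 0 < power hA (dist_nearest S) -> 0 < dist_nearest S.
  move=> cA; rewrite lt_neqAle dist_nearest_ge0 andbT; apply/eqP => a0.
  by move: cA; rewrite -a0 power0 // ltxx.
set a := dist_nearest S in a_gt0 *.
have [x0|x0|->] := ltgtP x 0.
- by move=> _; apply: lt_le_trans (CI_ge0 hhB S); rewrite lte_fin.
- rewrite !CI_gtE // => EA.
  have kx : 0 < (1 + x) / x by rewrite divr_gt0 //; lra.
  have a0 : 0 < a.
    apply: a_gt0; rewrite -(pmulr_lgt0 _ kx) -lte_fin.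
    exact: le_lt_trans (total_power_ge0 hhA S) EA.
  apply: le_lt_trans (total_power_ratio_le a0) _.
  rewrite [X in (_ < X)%E](_ : _ = (power hB a / power hA a)%:E *
      (power hA a * ((1 + x) / x))%:E)%E; last first.
    by rewrite -EFinM; congr (_%:E); field; rewrite !gt_eqF ?power_gt0.
  by rewrite lte_pmul2l // lte_fin divr_gt0 ?power_gt0.
- move=> /(CI_gt0P hhA)[cA EA]; apply/(CI_gt0P hhB).
  have a0 := a_gt0 cA; split; first exact: power_gt0.
  apply: le_lt_trans (total_power_ratio_le a0) _.
  by move: EA (total_power_ge0 hhA S); case: (total_power hA S) => // e _ _; rewrite -EFinM ltry.
Qed.

End Compare.

Section Shells.
Context {R : realType} {l : nat}.
Implicit Types (S A : set 'rV[R]_l).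

Lemma enorm_continuous : continuous (@enorm R l).
Proof.
move=> x; apply: continuous_comp; last exact: sqrt_continuous.
apply: (continuous_big (op := +%R) (@add_continuous R^o)) => i _ y /=.
by apply: continuousM; exact: coord_continuous.
Qed.

Definition shell (u v : R) : set 'rV[R]_l := [set x | u <= enorm x < v].

Lemma borel_shell u v : borel_set (shell u v).
Proof.
have borel_lt t : borel_set [set x : 'rV[R]_l | enorm x < t].
  apply: sub_sigma_algebra; rewrite -[X in open X]/(enorm @^-1` [set y | y < t]).
  by apply: open_comp; [move=> x _; exact: enorm_continuous | exact: open_lt].
have -> : shell u v = [set x | enorm x < v] `&` ~` [set x | enorm x < u].
  apply/seteqP; split => x /=.
    by move=> /andP[ux xv]; split => //; apply/negP; rewrite -leNgt.
  by move=> [xv /negP]; rewrite -leNgt => ux; apply/andP.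
apply: (@measurableI _ (g_sigma_algebraType (@open 'rV[R]_l)) _ _ (borel_lt v)).
exact: (@measurableC _ (g_sigma_algebraType (@open 'rV[R]_l)) _ (borel_lt u)).
Qed.

Lemma bounded_shell u v : Defs.bounded_set (shell u v).
Proof. by exists v => x /andP[_ /ltW]. Qed.

Definition count_ge S A (k : nat) :=
  exists s : seq 'rV[R]_l, [/\ uniq s, size s = k & forall x, x \in s -> (S `&` A) x].

Lemma count_geP S A k : count_ge S A k <-> ~ (exists2 j, (j < k)%N & count_eq S A j).
Proof.
split.
  move=> [s [us sk sSA]] [j jk [t [ut [tj tE]]]].
  have : (size s <= size t)%N by apply: uniq_leq_size => // x /sSA; rewrite -tE.
  by rewrite sk tj leqNgt jk.
elim: k => [_|k IH Nlt]; first by exists [::].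
have [s [us sk sSA]] : count_ge S A k.
  by apply: IH => -[j jk cj]; apply: Nlt; exists j => //; exact: ltnW.
have [all|/existsNP[x /not_implyP[SAx xs]]] :=
  pselect (forall x, (S `&` A) x -> x \in s); last first.
  exists (x :: s); split => /=; first by rewrite us andbT; apply/negP.
    by rewrite sk.
  by move=> y; rewrite inE => /orP[/eqP ->//|/sSA].
exfalso; apply: Nlt; exists k => //; exists s; split => //; split => //.
by apply/seteqP; split => y /=; [exact: sSA | exact: all].
Qed.

Lemma count_eq0 S A : count_eq S A 0 <-> S `&` A = set0.
Proof.
split; first by move=> [s [_ [/size0nil -> <-]]]; apply/seteqP; split => x.
by move=> SA; exists [::]; split => //; split => //; rewrite SA; apply/seteqP; split => x.
Qed.

Lemma count_ge1 S A : count_ge S A 1 <-> exists x, S x /\ A x.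
Proof.
split; first by move=> [[|x [|? ?]] [_ //= _ H]]; exists x; apply: H; rewrite inE.
by move=> [x SAx]; exists [:: x]; split => // y; rewrite inE => /eqP ->.
Qed.

End Shells.

Lemma eventually_all_seq (T : eqType) (s : seq T) (P : T -> nat -> Prop) :
  (forall x, x \in s -> exists N, forall n, (N <= n)%N -> P x n) ->
  exists N, forall x, x \in s -> forall n, (N <= n)%N -> P x n.
Proof.
elim: s => [|x s IH] H; first by exists 0%N.
have [N1 HN1] := IH (fun y ys => H y (mem_behead (ys : y \in behead (x :: s)))).
have [N2 HN2] := H x (mem_head _ _).
exists (maxn N1 N2) => y; rewrite inE => /orP[/eqP ->|ys] n; rewrite geq_max => /andP[n1 n2].
  exact: HN2.
exact: HN1.
Qed.

Section ShellSums.
Context {R : realType} {l : nat}.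
Implicit Types (S : set 'rV[R]_l) (x : 'rV[R]_l).
Variables (h : R -> R) (hh : path_loss h).

(* At resolution [n] the radii from [mesh n] to [n + 1] are cut into
   [nshells n] shells of width [mesh n]; [shell_power n j] bounds from below
   the power received from any point of the [j]-th one. *)
Definition mesh (n : nat) : R := n.+1%:R^-1.
Definition nshells (n : nat) := (n.+1 * n.+1)%N.
Definition in_shell n j x : bool :=
  (j.+1%:R * mesh n <= enorm x) && (enorm x < j.+2%:R * mesh n).
Definition shell_power n j := power h (j.+2%:R * mesh n).
Definition shell_sum n (ks : seq nat) :=
  \sum_(j < nshells n) (nth 0%N ks j)%:R * shell_power n j.
Definition shells_count_ge S n ks := forall j, (j < nshells n)%N ->
  count_ge S [set x | in_shell n j x] (nth 0%N ks j).

Lemma mesh_gt0 n : 0 < mesh n.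
Proof. by rewrite invr_gt0 ltr0n. Qed.

Lemma mesh_le m n : (m <= n)%N -> mesh n <= mesh m.
Proof. by move=> mn; rewrite lef_pV2 ?posrE ?ltr0n // ler_nat. Qed.

Lemma in_shell_inj n i j x : in_shell n i x -> in_shell n j x -> i = j.
Proof.
move=> /andP[ix xi] /andP[jx xj]; apply/eqP; rewrite eqn_leq.
have := le_lt_trans ix xj; have := le_lt_trans jx xi.
by rewrite !ltr_pM2r ?mesh_gt0 // !ltr_nat !ltnS => -> ->.
Qed.

Lemma shell_power_le n j x : in_shell n j x -> shell_power n j <= power h (enorm x).
Proof.
move=> /andP[jx xj]; have x0 : 0 < enorm x.
  by apply: lt_le_trans jx; rewrite mulr_gt0 ?mesh_gt0 ?ltr0n.
by have := power_le hh x0 (ltW xj).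
Qed.

Lemma shell_power_ge0 n j : 0 <= shell_power n j.
Proof. by rewrite power_ge0 // mulr_ge0 ?ler0n // ltW ?mesh_gt0. Qed.

Lemma shell_sum_le_total S n ks : shells_count_ge S n ks ->
  ((shell_sum n ks)%:E <= total_power h S)%E.
Proof.
move=> cnt; have g0 x : S x -> 0 <= power h (enorm x).
  by move=> _; rewrite power_ge0 ?enorm_ge0.
suff [s [us sS le]] : exists s, [/\ uniq s,
    forall x, x \in s -> S x /\ exists2 j, (j < nshells n)%N & in_shell n j x &
    shell_sum n ks <= \sum_(x <- s) power h (enorm x)].
  apply: le_trans (big_seq_le_esum g0 us _); first by rewrite lee_fin.
  by move=> x /sS[Sx _]; rewrite in_setE.
rewrite /shell_sum; elim: {-2}(nshells n) (leqnn (nshells n)) => [_|m IH mn].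
  by exists [::]; split => //; rewrite big_nil big_ord0.
have [s [us sS le]] := IH (ltnW mn).
have [t [ut st tS]] := cnt m mn.
exists (s ++ t); split.
- rewrite cat_uniq us ut andbT /=; apply/hasPn => x /tS[_ /= mx].
  apply/negP => /sS[_ [j jm jx]].
  by move: jm; rewrite (in_shell_inj jx mx) ltnn.
- move=> x; rewrite mem_cat => /orP[/sS[Sx [j jm jx]]|/tS[Sx mx]]; split => //.
    by exists j => //; exact: ltnW.
  by exists m.
- rewrite big_ord_recr big_cat /= -st; apply: lerD => //.
  have -> : (size t)%:R * shell_power n m = \sum_(x <- t) shell_power n m.
    by rewrite big_const_seq iter_addr_0 mulr_natl count_predT.
  by rewrite big_seq [leRHS]big_seq; apply: ler_sum => x /tS[_]; exact: shell_power_le.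
Qed.
Lemma shell_sum_counts n s :
  shell_sum n (mkseq (fun j => count (in_shell n j) s) (nshells n)) =
  \sum_(x <- s) \sum_(j < nshells n | in_shell n j x) shell_power n j.
Proof.
rewrite /shell_sum (exchange_big_dep xpredT) //=; apply: eq_bigr => j _.
by rewrite nth_mkseq // big_const_seq iter_addr_0 mulr_natl.
Qed.

Lemma shells_count_ge_counts S n s : uniq s -> {subset s <= S} ->
  shells_count_ge S n (mkseq (fun j => count (in_shell n j) s) (nshells n)).
Proof.
move=> us sS j jn; rewrite nth_mkseq //; exists (seq.filter (in_shell n j) s).
split; [exact: filter_uniq | by rewrite size_filter |].
by move=> x; rewrite mem_filter => /andP[jx xs]; split => //; rewrite -in_setE sS.
Qed.

Lemma power_le_shell_sum n x : mesh n <= enorm x -> enorm x < n.+1%:R ->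
  power h (enorm x + mesh n) <=
  \sum_(j < nshells n | in_shell n j x) shell_power n j.
Proof.
move=> mx xn; have n0 : 0 < n.+1%:R :> R by rewrite ltr0n.
set z := enorm x * n.+1%:R.
have z1 : 1 <= z by rewrite -ler_pdivrMr // div1r.
have zn : z < (nshells n)%:R by rewrite /z natrM ltr_pM2r.
have /andP[tz zt] := truncn_itv (le_trans ler01 z1).
set t := Num.truncn z in tz zt.
have t0 : (0 < t)%N by rewrite -ltnS -(ltr_nat R) (le_lt_trans z1).
have jn : (t.-1 < nshells n)%N.
  by rewrite -(ltr_nat R) (le_lt_trans _ zn) // (le_trans _ tz) // ler_nat leq_pred.
have St : t.-1.+1 = t by rewrite prednK.
have jx : in_shell n t.-1 x.
  by rewrite /in_shell St -ler_pdivlMr ?invr_gt0 // invrK tz ltr_pdivlMr ?invr_gt0 ?invrK.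
rewrite (bigD1 (Ordinal jn)) //= ler_wpDr ?sumr_ge0 // => [i _|]; first exact: shell_power_ge0.
have r0 : 0 < t.-1.+2%:R * mesh n by rewrite mulr_gt0 ?mesh_gt0 ?ltr0n.
have : t.-1.+2%:R * mesh n <= enorm x + mesh n.
  by rewrite St -natr1 mulrDl mul1r lerD2r ler_pdivrMr.
by move/(power_le hh r0).
Qed.

Lemma mesh_eventually x eps : 0 < enorm x -> 0 < eps ->
  exists N, forall n, (N <= n)%N -> [/\ mesh n <= enorm x, enorm x < n.+1%:R &
    power h (enorm x) - eps < power h (enorm x + mesh n)].
Proof.
move=> x0 eps0; have : power h (enorm x) - eps < power h (enorm x) by lra.
move=> /(power_lt_right hh x0)[r xr epsr].
have [k1 k1x] := ltr_add_invr x0; rewrite add0r in k1x.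
have [k2 k2x] := ltr_add_invr xr.
exists (maxn k1 (maxn k2 (Num.truncn (enorm x)))) => n.
rewrite !geq_max => /and3P[n1 n2 n3]; split.
- exact: le_trans (mesh_le n1) (ltW k1x).
- have /andP[_ lt] := truncn_itv (enorm_ge0 x).
  by apply: lt_le_trans lt _; rewrite ler_nat.
- apply: lt_le_trans epsr (power_le hh _ _); first by rewrite addr_gt0 ?mesh_gt0.
  by apply: ltW; apply: le_lt_trans k2x; rewrite lerD2l; exact: mesh_le.
Qed.

Lemma total_power_gt_shell_sum S y : (y%:E < total_power h S)%E ->
  exists n ks, y < shell_sum n ks /\ shells_count_ge S n ks.
Proof.
move=> /esum_gt_big_seq[s [us sS]]; rewrite lte_fin => ys.
set G := \sum_(x <- s) power h (enorm x) in ys.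
set eps := (G - y) / ((size s)%:R + 1).
have eps0 : 0 < eps by rewrite divr_gt0 ?subr_gt0 // ltr_wpDl ?ler0n.
have [N HN] : exists N, forall x, x \in s -> forall n, (N <= n)%N ->
    0 < enorm x -> [/\ mesh n <= enorm x, enorm x < n.+1%:R &
    power h (enorm x) - eps < power h (enorm x + mesh n)].
  apply: eventually_all_seq => x _; have [x0|xpos] := leP (enorm x) 0.
    by exists 0%N.
  by have [N HN] := mesh_eventually xpos eps0; exists N => n /HN.
exists N, (mkseq (fun j => count (in_shell N j) s) (nshells N)).
split; last exact: shells_count_ge_counts.
have near x : x \in s ->
    power h (enorm x) - eps <= \sum_(j < nshells N | in_shell N j x) shell_power N j.
  move=> xs; have [x0|xpos] := leP (enorm x) 0.
    have -> : enorm x = 0 by apply/le_anti; rewrite x0 enorm_ge0.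
    rewrite power0 // sub0r; apply: (@le_trans _ _ 0); first by rewrite oppr_le0 ltW.
    by apply: sumr_ge0 => j _; exact: shell_power_ge0.
  have [mx xN pw] := HN x xs N (leqnn N) xpos.
  exact: le_trans (ltW pw) (power_le_shell_sum mx xN).
rewrite shell_sum_counts; apply: (@lt_le_trans _ _ (G - (size s)%:R * eps)).
  have : (size s)%:R * eps < G - y.
    rewrite /eps mulrA ltr_pdivrMr ?ltr_wpDl ?ler0n // [ltRHS]mulrDr mulr1 mulrC.
    by rewrite ltrDl subr_gt0.
  lra.
have -> : (size s)%:R * eps = \sum_(x <- s) eps.
  by rewrite big_const_seq iter_addr_0 mulr_natl count_predT.
by rewrite -sumrB big_seq [leRHS]big_seq; apply: ler_sum => x; exact: near.
Qed.

Lemma total_power_gtP S y : (y%:E < total_power h S)%E <->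
  exists n ks, y < shell_sum n ks /\ shells_count_ge S n ks.
Proof.
split; first exact: total_power_gt_shell_sum.
move=> [n [ks [yl cnt]]]; apply: lt_le_trans (shell_sum_le_total cnt).
by rewrite lte_fin.
Qed.

End ShellSums.

Section NearestCount.
Context {R : realType} {l : nat}.
Variables (h : R -> R) (hh : path_loss h).

Lemma power_nearest_gtP (S : set 'rV[R]_l) c : 0 <= c ->
  c < power h (dist_nearest S) <-> exists q : rat,
    [/\ c < power h (@ratr R q), 0 < @ratr R q, count_ge S (shell 0 (@ratr R q)) 1 &
        exists k, count_eq S (shell 0 (mesh k)) 0].
Proof.
move=> c0; split => [ca|[q [cq q0 /count_ge1[y [Sy /andP[_ yq]]] [k /count_eq0 Sk]]]].
  have a0 : 0 < dist_nearest S.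
    rewrite lt_neqAle dist_nearest_ge0 andbT; apply/eqP => a0.
    by move: ca; rewrite -a0 power0 // ltNge c0.
  have [r ar cr] := power_lt_right hh a0 ca.
  have [q /[!in_itv]/= /andP[aq qr]] := rat_in_itvoo ar.
  exists q; split; first exact: lt_le_trans cr (power_le hh (lt_trans a0 aq) (ltW qr)).
  - exact: lt_trans aq.
  - have [x Sx xq] := dist_nearest_lt (dist_nearest_gt0_neq0 a0) aq.
    by apply/count_ge1; exists x; rewrite /shell /= enorm_ge0.
  have [k ka] := ltr_add_invr a0; rewrite add0r in ka.
  exists k; apply/count_eq0; apply/seteqP; split => // x [Sx /andP[_ xk]].
  by have := lt_trans (le_lt_trans (dist_nearest_le Sx) xk) ka; rewrite ltxx.
have ka : mesh k <= dist_nearest S.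
  apply: lb_le_inf; first by exists (enorm y), y.
  move=> _ [x Sx <-]; rewrite leNgt; apply/negP => xk.
  have : (S `&` shell 0 (mesh k)) x by split; rewrite //= /shell /= enorm_ge0.
  by rewrite Sk.
apply: lt_le_trans cq (power_le hh (lt_le_trans (mesh_gt0 k) ka) _).
exact: le_trans (dist_nearest_le Sy) (ltW yq).
Qed.

End NearestCount.

Section Measurability.
Context d (Omega : measurableType d) (R : realType) (l : nat)
  (Phi : Omega -> set 'rV[R]_l).
Hypothesis measurable_count : forall A k, borel_set A -> Defs.bounded_set A ->
  measurable [set w | count_eq (Phi w) A k].

Lemma measurable_count_ge u v k :
  measurable [set w | count_ge (Phi w) (shell u v) k].
Proof.
rewrite [X in measurable X](_ : _ = ~` \bigcup_(j < k) [set w | count_eq (Phi w) (shell u v) j]).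
  apply: measurableC; apply: bigcup_measurable => j _.
  exact: measurable_count (borel_shell u v) (bounded_shell u v).
apply/seteqP; split => w /=.
  by move=> /count_geP Nlt [j /= jk cj]; apply: Nlt; exists j.
by move=> Nlt; apply/count_geP => -[j jk cj]; apply: Nlt; exists j.
Qed.

Variables (h : R -> R) (hh : path_loss h).

Lemma measurable_power_nearest_gt c :
  measurable [set w | c < power h (dist_nearest (Phi w))].
Proof.
have [c0|c0] := ltP c 0.
  rewrite [X in measurable X](_ : _ = setT) //; apply/seteqP; split => w // _.
  by apply: lt_le_trans c0 _; rewrite /= power_ge0 ?dist_nearest_ge0.
rewrite [X in measurable X](_ : _ = \bigcup_(q : rat)
    (if (c < power h (@ratr R q)) && (0 < @ratr R q) then
       [set w | count_ge (Phi w) (shell 0 (@ratr R q)) 1] `&`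
       \bigcup_k [set w | count_eq (Phi w) (shell 0 (mesh k)) 0]
     else set0)).
  apply: bigcupT_measurable_rat => q; case: ifPn => // _.
  apply: measurableI; first exact: measurable_count_ge.
  apply: bigcupT_measurable => k.
  exact: measurable_count (borel_shell _ _) (bounded_shell _ _).
apply/seteqP; split => w /=.
  move=> /(power_nearest_gtP hh _ c0)[q [cq q0 ge1 [k eq0]]].
  by exists q => //; rewrite cq q0; split => //; exists k.
move=> [q _]; case: ifPn => // /andP[cq q0] [ge1 [k _ eq0]].
by apply/(power_nearest_gtP hh _ c0); exists q; split => //; exists k.
Qed.

Lemma measurable_total_power_gt y :
  measurable [set w | (y%:E < total_power h (Phi w))%E].
Proof.
rewrite [X in measurable X](_ : _ = \bigcup_(p : nat * seq nat)
    (if y < shell_sum h p.1 p.2 then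
       \bigcap_(j < nshells p.1)
         [set w | count_ge (Phi w) [set x | in_shell p.1 j x] (nth 0%N p.2 j)]
     else set0)).
  apply: countable_bigcupT_measurable => // -[n ks] /=; case: ifPn => // _.
  apply: bigcap_measurable => [|j _]; last exact: measurable_count_ge.
  by exists 0%N; rewrite /= muln_gt0.
apply/seteqP; split => w /=.
  by move=> /(total_power_gtP hh)[n [ks [yl cnt]]]; exists (n, ks); rewrite //= yl.
move=> [[n ks] _] /=; case: ifPn => // yl cnt; apply/(total_power_gtP hh).
by exists n, ks; split => // j jn; exact: cnt.
Qed.

Lemma measurable_total_power_lt v :
  measurable [set w | (total_power h (Phi w) < v%:E)%E].
Proof.
rewrite (_ : [set w | _] =
    \bigcup_k ~` [set w | ((v - k.+1%:R^-1)%:E < total_power h (Phi w))%E]).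
  by apply: bigcupT_measurable => k; apply: measurableC; exact: measurable_total_power_gt.
apply/seteqP; split => w /=; last first.
  move=> [k _ /negP]; rewrite -leNgt => /le_lt_trans; apply.
  by rewrite lte_fin ltrBlDr ltrDl invr_gt0 ltr0n.
move=> Ev; suff [k Ek] : exists k, (total_power h (Phi w) <= (v - k.+1%:R^-1)%:E)%E.
  by exists k => //=; apply/negP; rewrite -leNgt.
move: Ev; case: (total_power h (Phi w)) => [e| |] // ev; last by exists 0%N; rewrite leNye.
by have [k ek] := ltr_add_invr ev; exists k; rewrite lee_fin lerBrDr ltW.
Qed.

Lemma measurable_total_power_lt_scaled K : 0 < K ->
  measurable [set w |
    (total_power h (Phi w) < (power h (dist_nearest (Phi w)) * K)%:E)%E].
Proof.
move=> K0; rewrite [X in measurable X](_ : _ = \bigcup_(q : rat)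
    ([set w | (total_power h (Phi w) < (@ratr R q)%:E)%E] `&`
     [set w | @ratr R q / K < power h (dist_nearest (Phi w))])).
  apply: bigcupT_measurable_rat => q; apply: measurableI.
    exact: measurable_total_power_lt.
  exact: measurable_power_nearest_gt.
apply/seteqP; split => w /=; last first.
  by move=> [q _ [Eq qK]]; apply: lt_trans Eq _; rewrite lte_fin -ltr_pdivrMr.
move=> EK; suff [q Eq qK] : exists2 q : rat, (total_power h (Phi w) < (@ratr R q)%:E)%E &
    @ratr R q < power h (dist_nearest (Phi w)) * K.
  by exists q => //; split => //=; rewrite ltr_pdivrMr.
move: EK (total_power_ge0 hh (Phi w)).
case: (total_power h (Phi w)) => [e| |] //; rewrite ?leeNy_eq // lte_fin => eK _.
by have [q /[!in_itv]/= /andP[eq qK]] := rat_in_itvoo eK; exists q; rewrite ?lte_fin.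
Qed.

Lemma measurable_CI_gt0 :
  measurable [set w |
    0 < power h (dist_nearest (Phi w)) /\ (total_power h (Phi w) < +oo)%E].
Proof.
rewrite [X in measurable X](_ : _ = [set w | 0 < power h (dist_nearest (Phi w))] `&`
    \bigcup_n [set w | (total_power h (Phi w) < n%:R%:E)%E]).
  apply: measurableI; first exact: measurable_power_nearest_gt.
  by apply: bigcupT_measurable => n; exact: measurable_total_power_lt.
apply/seteqP; split => w /= [c0 Efin]; split => //; last first.
  by case: Efin => n _ /lt_trans; apply; rewrite ltry.
suff [n En] : exists n : nat, (total_power h (Phi w) < n%:R%:E)%E by exists n.
move: Efin; case: (total_power h (Phi w)) => [e| |] // _; last by exists 0%N; rewrite ltNye.
exists (Num.truncn `|e|).+1; rewrite lte_fin.
by have /andP[_ lt] := truncn_itv (normr_ge0 e); apply: le_lt_trans lt; exact: ler_norm.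
Qed.

Lemma measurable_CI_gt x : measurable [set w | (x%:E < CI h (Phi w))%E].
Proof.
have [x0|x0|->] := ltgtP x 0.
- rewrite [X in measurable X](_ : _ = setT) //; apply/seteqP; split => w // _.
  by apply: lt_le_trans (CI_ge0 hh (Phi w)); rewrite lte_fin.
- under eq_set do rewrite (CI_gtE hh _ x0).
  by apply: measurable_total_power_lt_scaled; rewrite divr_gt0 //; lra.
- rewrite [X in measurable X](_ : _ = [set w | 0 < power h (dist_nearest (Phi w)) /\
      (total_power h (Phi w) < +oo)%E]); first exact: measurable_CI_gt0.
  by apply/seteqP; split => w /= /(CI_gt0P hh).
Qed.

End Measurability.

Lemma st_le_CI (R : realType) d (Omega : measurableType d)
    (P : probability Omega R) (l : nat) (Phi : Omega -> set 'rV[R]_l)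
    (hA hB : R -> R) :
  (forall A k, borel_set A -> Defs.bounded_set A ->
     measurable [set w | count_eq (Phi w) A k]) ->
  path_loss hA -> path_loss hB ->
  (forall a r, 0 < a -> a <= r -> hB a * hA r <= hA a * hB r) ->
  st_le P (fun w => CI hA (Phi w)) (fun w => CI hB (Phi w)).
Proof.
move=> count_meas hhA hhB ratio_homo x.
apply: le_measure; rewrite ?inE; first exact: (measurable_CI_gt count_meas hhA x).
  exact: (measurable_CI_gt count_meas hhB x).
move=> w; exact: CI_gt_mono.
Qed.

Theorem corollary6 (R : realType) (d : measure_display) (Omega : measurableType d)
    (P : probability Omega R) (l : nat) (lam e1 e2 : R)
    (Phi : Omega -> set 'rV[R]_l) :
  (1 <= l <= 3)%N -> 0 < lam -> is_hPPP P lam Phi ->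
  ((l%:R < e1 < e2) ->
     st_le P (fun w => CI (h1 e1) (Phi w)) (fun w => CI (h2 e1 e2) (Phi w))) /\
  ((l%:R < e2 < e1) ->
     st_le P (fun w => CI (h2 e1 e2) (Phi w)) (fun w => CI (h1 e1) (Phi w))).
Proof.
move=> /andP[l1 _] _ [count_meas _].
have l0 : 0 < l%:R :> R by rewrite ltr0n.
split => /andP[le1 e12].
- have e10 : 0 < e1 by lra.
  have e20 : 0 < e2 by lra.
  apply: st_le_CI count_meas (path_loss_h1 e10) (path_loss_h2 e10 e20) _.
  exact/h2_h1_ratio_le/ltW.
- have e20 : 0 < e2 by lra.
  have e10 : 0 < e1 by lra.
  apply: st_le_CI count_meas (path_loss_h2 e10 e20) (path_loss_h1 e10) _.
  exact/h1_h2_ratio_le/ltW.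
Qed.
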